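(* Let $p>2$ be a prime, $m\ge2$, and $c_1,\ldots,c_{2m}\in\mathbb{Z}_p$ with $c_i\not\equiv0\pmod p$. Let $G$ be the pro-$p$-group with generators $x_1,\ldots,x_{2m}$ and relations $$x_1^{pc_1}[x_1,x_2]=1,\ x_2^{pc_2}[x_2,x_3]=1,\ \ldots,\ x_{2m-1}^{pc_{2m-1}}[x_{2m-1},x_{2m}]=1,\ x_{2m}^{pc_{2m}}[x_{2m},x_1]=1,$$ i.e. $G=F/R$ with $F$ the free pro-$p$-group on $x_1,\dots,x_{2m}$ and $R$ the closed normal subgroup generated by the left-hand sides. Then for every $n<p$, every continuous homomorphism $G\to\mathrm{GL}_n^{(1)}(\mathbb{Z}_p)$ is trivial.
   Context: $\mathrm{GL}_n^{(1)}(\mathbb{Z}_p)=\{X\in\mathrm{GL}_n(\mathbb{Z}_p): X\equiv 1 \bmod p\}$; $[x,y]=x^{-1}y^{-1}xy$. *)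

From HB Require Import structures.
From mathcomp Require Import all_boot all_order all_algebra.
Set Implicit Arguments. Unset Strict Implicit. Unset Printing Implicit Defensive.
Import GRing.Theory.
Local Open Scope ring_scope.

(* p-adic integers Z_p, as the inverse limit of Z/p^(k+1), k >= 0:
   coordinate k is the residue mod p^(k+1).  (Used only for p prime > 2,
   so every 'Z_(p^(k+1)) really is Z/p^(k+1)Z.) *)
Record Zpadic (p : nat) := ZPadic {
  zp_coord : forall k : nat, 'Z_(p ^ k.+1);
  zp_compat : forall k : nat,
    ((zp_coord k.+1 : nat) %% p ^ k.+1 = (zp_coord k : nat))%N }.

(* GL_n^(1)(Z_p) = { X in GL_n(Z_p) : X = 1 mod p }, as compatible families
   of n x n matrices over Z/p^(k+1) whose reduction mod p is the identity
   (such matrices are automatically invertible over Z_p). *)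
Record GLn1 (p n : nat) := GLN1 {
  gl_coord : forall k : nat, 'M['Z_(p ^ k.+1)]_n;
  gl_compat : forall (k : nat) (i j : 'I_n),
    ((gl_coord k.+1 i j : nat) %% p ^ k.+1 = (gl_coord k i j : nat))%N;
  gl_one_mod_p : gl_coord 0 = 1%:M }.

Definition gl_trivial (p n : nat) (X : GLn1 p n) : Prop :=
  forall k : nat, gl_coord X k = 1%:M.

Definition mxpow (R : pzRingType) (n : nat) (A : 'M[R]_n) (e : nat) : 'M[R]_n :=
  iter e (mulmx A) 1%:M.

Definition mxcomm (R : comUnitRingType) (n : nat) (A B : 'M[R]_n) : 'M[R]_n :=
  invmx A *m invmx B *m A *m B.

(* Since X = 1 mod p, X mod p^(k+1) has order dividing p^k, so
   the p-adic power X^(p c) reduces mod p^(k+1) to (X mod p^(k+1))^(p c')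
   for any natural c' = c mod p^k; we use c' = the residue of c mod p^(k+1). *)
Definition rel_holds (p n : nat) (c : Zpadic p) (X Y : GLn1 p n) : Prop :=
  forall k : nat,
    mxpow (gl_coord X k) (p * zp_coord c k)%N *m mxcomm (gl_coord X k) (gl_coord Y k)
    = 1%:M.

(* Continuous homomorphisms G -> GL_n^(1)(Z_p), where
   G = < x_0..x_(2m-1) | x_i^(p c_i) [x_i, x_(i+1 mod 2m)] = 1 > (pro-p),
   are (by the universal property of the free pro-p group, GL_n^(1)(Z_p)
   being pro-p) exactly the tuples of images of the generators satisfying
   the defining relations.  Indices are 0-based here. *)
Definition hom_G_GLn1 (p m n : nat) (c : nat -> Zpadic p) :=
  { X : nat -> GLn1 p n |
      forall i : nat, (i < 2 * m)%N -> rel_holds (c i) (X i) (X ((i.+1 %% (2 * m))%N)) }.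

From mathcomp Require Import all_boot all_order all_algebra.
From mathcomp Require Import ring zify.
(* Suppose every X_i is 1 modulo p^(e+1) and write X_i = 1 + p^(e+1) A_i modulo
   p^(e+3).  Modulo p^(e+3) the relation X_i X_(i+1) X_i^(p c_i) = X_(i+1) X_i
   becomes p^(e+2) (p^e [A_i, A_(i+1)] + c_i A_i) = 0, so a_i = A_i mod p satisfies
   p^e [a_i, a_(i+1)] + c_i a_i = 0 over F_p.  In characteristic p > n, [b, c] = mu b
   with mu <> 0 forces b to be nilpotent, and [a, b] = lam a with lam <> 0 and b
   nilpotent forces a = 0.  Applied to the relations for i + 1 and i this gives
   a_i = 0, i.e. X_i = 1 modulo p^(e+2); induction on e concludes. *)

Set Implicit Arguments. Unset Strict Implicit. Unset Printing Implicit Defensive.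
Import GRing.Theory.
Local Open Scope ring_scope.

Section AdEigenvectors.
Variables (F : fieldType) (n' : nat).
Local Notation n := n'.+1.
Implicit Types (a b c : 'M[F]_n) (mu : F).

Lemma commr_exprZ b c mu : b * c - c * b = mu *: b ->
  forall k, b ^+ k * c - c * b ^+ k = (k%:R * mu) *: b ^+ k.
Proof.
move=> bc; elim=> [|k IHk]; first by rewrite expr0 mul1r mulr1 subrr mul0r scale0r.
have -> : b ^+ k.+1 * c - c * b ^+ k.+1
          = b * (b ^+ k * c - c * b ^+ k) + (b * c - c * b) * b ^+ k.
  by rewrite exprS mulrBr mulrBl !mulrA addrA subrK.
by rewrite IHk bc -scalerAr -scalerAl -exprS -scalerDl mulrSr mulrDl mul1r.
Qed.

Hypothesis char_gt_n : forall k, (0 < k <= n)%N -> k%:R != 0 :> F.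

(* With chi the characteristic polynomial of b and k^_j the falling factorial,
   S j := \sum_k chi_k k^_j mu^j b^k satisfies S 0 = chi(b) = 0 (Cayley-Hamilton)
   and S j.+1 = [S j, c] - j mu S j, so S n = n! mu^n b^n vanishes. *)
Lemma ad_eigenvector_nilpotent b c mu :
  mu != 0 -> b * c - c * b = mu *: b -> b ^+ n = 0.
Proof.
move=> mu_neq0 bc; have bkc := commr_exprZ bc.
set chi := char_poly b.
pose ff (k j : nat) : F := \prod_(i < j) (k%:R - i%:R).
pose S j := \sum_(k < n.+1) (chi`_k * ff k j * mu ^+ j) *: b ^+ k.
have S0 : S 0%N = 0.
  rewrite /S -[RHS](Cayley_Hamilton b) -/chi -[chi in horner_mx _ chi]coefK.
  rewrite poly_def linear_sum size_char_poly; apply: eq_bigr => k _.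
  by rewrite /ff big_ord0 expr0 !mulr1 linearZ /= rmorphXn /= horner_mx_X.
have SS j : S j.+1 = S j * c - c * S j - (j%:R * mu) *: S j.
  rewrite /S mulr_suml mulr_sumr -sumrB scaler_sumr -sumrB; apply: eq_bigr => k _.
  rewrite -scalerAl -scalerAr -scalerBr bkc !scalerA -scalerBl; congr (_ *: _).
  by rewrite /ff big_ord_recr /= exprSr; ring.
have Sj0 j : S j = 0 by elim: j => // j IH; rewrite SS IH mul0r mulr0 subrr scaler0 subrr.
have := Sj0 n; rewrite /S big_ord_recr /= big1 ?add0r; last first.
  move=> k _; rewrite /ff (bigD1 (Ordinal (ltn_ord k))) //=.
  by rewrite subrr mul0r mulr0 mul0r scale0r.
move/eqP; rewrite scaler_eq0 => /orP[|/eqP//].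
have -> : chi`_n = 1.
  by have := char_poly_monic b; rewrite monicE /lead_coef size_char_poly => /eqP.
rewrite mul1r mulf_eq0 expf_eq0 (negbTE mu_neq0) andbF orbF /ff prodf_seq_eq0.
case/hasP=> i _ /=; rewrite -natrB; last exact: ltnW.
by rewrite (negbTE (char_gt_n _)) // subn_gt0 ltn_ord leq_subr.
Qed.

Lemma ad_nilpotent_eigenvector_eq0 a b lam :
  lam != 0 -> b ^+ n = 0 -> a * b - b * a = lam *: a -> a = 0.
Proof.
move=> lam_neq0 b_nil ab.
suff bja j : (j <= n)%N -> b ^+ (n - j) * a = 0.
  by have := bja n (leqnn n); rewrite subnn expr0 mul1r.
elim: j => [_|j IHj lt_jn]; first by rewrite subn0 b_nil mul0r.
set u := b ^+ (n - j.+1) * a.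
have ub : u * b = lam *: u.
  have -> : u * b = b ^+ (n - j.+1) * (a * b - b * a) + b ^+ (n - j.+1).+1 * a.
    by rewrite exprSr mulrBr !mulrA subrK.
  by rewrite ab -scalerAr subnSK // IHj ?addr0 // ltnW.
have ubk k : u * b ^+ k = lam ^+ k *: u.
  elim: k => [|k IHk]; first by rewrite mulr1 expr0 scale1r.
  by rewrite exprSr mulrA IHk -scalerAl ub scalerA -exprSr.
have /esym/eqP := ubk n; rewrite b_nil mulr0 scaler_eq0 expf_eq0 (negbTE lam_neq0).
by rewrite andbF => /eqP.
Qed.

Lemma linked_ad_eq0 a b c (eps g1 g2 : F) : g1 != 0 -> g2 != 0 ->
  eps *: (a * b - b * a) + g1 *: a = 0 ->
  eps *: (b * c - c * b) + g2 *: b = 0 -> a = 0.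
Proof.
move=> g1_neq0 g2_neq0 Ea Eb.
have [eps0 | eps_neq0] := eqVneq eps 0.
  by move/eqP: Ea; rewrite eps0 scale0r add0r scaler_eq0 (negbTE g1_neq0) => /eqP.
have solve (x y : 'M[F]_n) g : eps *: x + g *: y = 0 -> x = (- g / eps) *: y.
  move=> /eqP; rewrite addr_eq0 => /eqP/(congr1 (fun z => eps^-1 *: z)).
  by rewrite scalerA mulVf // scale1r => ->; rewrite -scaleNr scalerA mulrC.
have ratio_neq0 g : g != 0 -> - g / eps != 0.
  by move=> g_neq0; rewrite mulf_eq0 oppr_eq0 invr_eq0 negb_or g_neq0.
apply: ad_nilpotent_eigenvector_eq0 (ratio_neq0 _ g1_neq0) _ (solve _ _ _ Ea).
exact: ad_eigenvector_nilpotent (ratio_neq0 _ g2_neq0) (solve _ _ _ Eb).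
Qed.

End AdEigenvectors.

Lemma mxpowE (R : pzRingType) n' (A : 'M[R]_n'.+1) k : mxpow A k = A ^+ k.
Proof. by elim: k => //= k IHk; rewrite /mxpow /= -/(mxpow A k) IHk exprS mulmxE. Qed.

Lemma mxpow_mxcomm_eq1 (R : comUnitRingType) n' (X Y : 'M[R]_n'.+1) k :
  mxpow X k *m mxcomm X Y = 1%:M -> X * Y * X ^+ k = Y * X.
Proof.
rewrite mxpowE /mxcomm !mulmxE => XkQ.
set Q := _ * Y in XkQ.
have XkQ' : X ^+ k * X^-1 * Y^-1 * X * Y = 1 by rewrite !mulrA in XkQ.
have [_ Y_unit] := mulmx1_unit XkQ'.
have /mulmx1_unit[_ X_unit] : Y * (X ^+ k * X^-1 * Y^-1) * X = 1.
  by rewrite -mulrA; apply: mulmx1C.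
have Q_unit : Q \is a GRing.unit by rewrite !unitrMr ?unitrV.
rewrite (canRL (mulrK Q_unit) XkQ) mul1r /Q.
by rewrite !invrM ?unitrMr ?unitrV // !invrK !mulrA mulrK // mulrV // mul1r.
Qed.

Lemma exprD1_nil3 (R : pzRingType) (x : R) k : x ^+ 3 = 0 ->
  (1 + x) ^+ k = 1 + x *+ k + x ^+ 2 *+ 'C(k, 2).
Proof.
move=> x3; elim: k => [|k IHk]; first by rewrite expr0 mulr0n !addr0.
rewrite exprSr IHk binS bin1 mulrDr mulr1 !mulrDl mul1r.
rewrite !mulrnAl -expr2 -exprSr x3 mul0rn addr0 mulrnDr mulrS.
rewrite (addrC x) !addrA; congr (_ + _); rewrite -!addrA; congr (_ + _).
by rewrite [_ + x]addrC.
Qed.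

Lemma odd_dvdn_bin2 p k : odd p -> (p %| k)%N -> (p %| 'C(k, 2))%N.
Proof.
move=> p_odd p_dvd_k; rewrite -(@Gauss_dvdr p 2) ?coprimen2 //.
by rewrite -[(2 * _)%N](mul_bin_diag k 1) bin1 dvdn_mulr.
Qed.

Section FirstOrderTerms.
Variables (R : comNzRingType) (n' : nat) (p c : nat) (t : R).
Hypotheses (p_odd : odd p) (t3_eq0 : t ^+ 3 = 0) (pt2_eq0 : p%:R * t ^+ 2 = 0).
Local Notation n := n'.+1.
Implicit Types A B : 'M[R]_n.

Lemma expr_1addZ_pmul A : (1 + t *: A) ^+ (p * c) = 1 + ((p * c)%:R * t) *: A.
Proof.
rewrite exprD1_nil3; last by rewrite exprZn t3_eq0 scale0r.
have /dvdnP[q ->] := odd_dvdn_bin2 p_odd (dvdn_mulr c (dvdnn p)).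
have -> : (t *: A) ^+ 2 *+ (q * p) = 0.
  by rewrite mulnC mulrnA exprZn scalerMnl -mulr_natl pt2_eq0 scale0r mul0rn.
by rewrite addr0 scalerMnl -mulr_natl.
Qed.

Lemma first_order_commutator A B :
  (1 + t *: A) * (1 + t *: B) * (1 + t *: A) ^+ (p * c) = (1 + t *: B) * (1 + t *: A) ->
  t ^+ 2 *: (A * B - B * A) + ((p * c)%:R * t) *: A = 0.
Proof.
set X := 1 + t *: A; set Y := 1 + t *: B; set s := (p * c)%:R * t.
have st_eq0 : s * t = 0.
  by rewrite -[RHS](mulr0 c%:R) -pt2_eq0 /s natrM; ring.
have mul1Z (C D : 'M[R]_n) :
    (1 + t *: C) * (1 + t *: D) = 1 + t *: (C + D + t *: (C * D)).
  rewrite mulrDl !mulrDr !mul1r mulr1 -scalerAl -scalerAr !scalerDr scalerA.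
  by rewrite -!addrA [t *: D + _]addrCA.
have XYX : X * Y * X ^+ (p * c) = X * Y + s *: A.
  rewrite expr_1addZ_pmul mulrDr mulr1 -scalerAr; congr (_ + _).
  rewrite mul1Z mulrDl mul1r -scalerAl scalerDr scalerA st_eq0 scale0r.
  by rewrite addr0.
have XYYX : X * Y - Y * X = t ^+ 2 *: (A * B - B * A).
  rewrite !mul1Z opprD addrACA subrr add0r -scalerBr (addrC B A) opprD addrACA.
  by rewrite subrr add0r -scalerBr scalerA -expr2.
by move=> XYX_YX; rewrite -XYYX addrAC -XYX XYX_YX subrr.
Qed.

End FirstOrderTerms.

Lemma Zp_val_lt N (x : 'Z_N) : (1 < N)%N -> (x < N)%N.
Proof. by move=> N_gt1; rewrite -[X in (_ < X)%N](Zp_cast N_gt1). Qed.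

Lemma intr_Zp_eq0 N (z : int) : (1 < N)%N -> ((z%:~R : 'Z_N) == 0) = (N%:Z %| z)%Z.
Proof.
move=> N_gt1; case: z => k; last rewrite NegzE intrN oppr_eq0 rpredN;
  by rewrite -(inj_eq val_inj) /= val_Zp_nat // dvdzE.
Qed.

Lemma val_Zp_scalar1 N n (a b : 'I_n) :
  (1 < N)%N -> ((1%:M : 'M['Z_N]_n) a b : nat) = (a == b).
Proof.
by move=> N_gt1; rewrite mxE val_Zp_nat // modn_small // (leq_ltn_trans (leq_b1 _)).
Qed.

Section PadicCoordinates.
Variable p : nat.
Hypothesis p_pr : prime p.
Let p_gt1 : (1 < p)%N := prime_gt1 p_pr.

Lemma pexp_gt1 k : (1 < p ^ k.+1)%N.
Proof. by rewrite -(exp1n k.+1) ltn_exp2r. Qed.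

Lemma compatible_modn (x : forall k, 'Z_(p ^ k.+1)) :
  (forall k, (x k.+1 : nat) %% p ^ k.+1 = x k)%N ->
  forall k d, ((x (k + d) : nat) %% p ^ k.+1 = x k)%N.
Proof.
move=> x_compat k; elim=> [|d IHd].
  by rewrite addn0 modn_small ?Zp_val_lt ?pexp_gt1.
by rewrite addnS -IHd -(x_compat (k + d)) modn_dvdm // dvdn_exp2l // ltnS leq_addr.
Qed.

Lemma intr_pexp_eq0 k (z : int) :
  ((z%:~R : 'Z_(p ^ k.+1)) == 0) = ((p%:Z) ^+ k.+1 %| z)%Z.
Proof. by rewrite intr_Zp_eq0 ?pexp_gt1 // -!natz natrX. Qed.

Lemma intr_Fp_eq0 (z : int) : ((z%:~R : 'F_p) == 0) = (p%:Z %| z)%Z.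
Proof. by rewrite intr_Zp_eq0 pdiv_id. Qed.

Lemma natr_Fp_neq0 k : (0 < k < p)%N -> k%:R != 0 :> 'F_p.
Proof.
move=> /andP[k_gt0 k_lt_p]; rewrite -[k%:R]/((k%:Z)%:~R) intr_Fp_eq0 dvdzE /=.
by apply/negP => /(dvdn_leq k_gt0); rewrite leqNgt k_lt_p.
Qed.

Lemma map_mx_intr_Fp_eq0 k m n (M : 'M[int]_(m, n)) :
  map_mx (intr : int -> 'Z_(p ^ k.+1)) ((p%:Z) ^+ k *: M) = 0 ->
  map_mx (intr : int -> 'F_p) M = 0.
Proof.
move=> /matrixP pkM0; apply/matrixP => a b; apply/eqP.
have /eqP := pkM0 a b; rewrite !mxE intr_Fp_eq0 intr_pexp_eq0.
by rewrite exprSr dvdz_mul2l // expf_neq0 // -lt0n prime_gt0.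
Qed.

Lemma zp_coord_Fp_neq0 (c : Zpadic p) k :
  zp_coord c 0 != 0 -> (zp_coord c k : nat)%:R != 0 :> 'F_p.
Proof.
move=> c0_neq0; rewrite -[_%:R]/((_%:Z)%:~R) intr_Fp_eq0 dvdzE /= /dvdn.
rewrite -[p in (_ %% p)%N]expn1 -[k]add0n (compatible_modn (zp_compat c)).
by apply: contra c0_neq0 => /eqP c0; apply/eqP/val_inj.
Qed.

Variable n : nat.
Implicit Type X : GLn1 p n.

Definition gl_first_order X e : 'M[int]_n :=
  \matrix_(a, b) ((gl_coord X e.+2 a b : nat) %/ p ^ e.+1)%N%:Z.

Definition gl_digit X e : 'M['F_p]_n := map_mx intr (gl_first_order X e).

Lemma gl_coord_modn X k d a b :
  ((gl_coord X (k + d) a b : nat) %% p ^ k.+1 = gl_coord X k a b)%N.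
Proof. exact: compatible_modn (fun k => gl_compat X k a b) k d. Qed.

Lemma gl_coord_low_digits X e a b : gl_coord X e = 1%:M ->
  (gl_coord X e.+2 a b %% p ^ e.+1 = (a == b))%N.
Proof.
move=> Xe1; have := gl_coord_modn X e 2 a b.
by rewrite addn2 Xe1 val_Zp_scalar1 ?pexp_gt1.
Qed.

Lemma gl_coord_first_order X e : gl_coord X e = 1%:M ->
  gl_coord X e.+2 = map_mx intr (1%:M + (p%:Z ^+ e.+1) *: gl_first_order X e).
Proof.
move=> Xe1; apply/matrixP => a b; rewrite !mxE -[LHS]natr_Zp.
rewrite {1}(divn_eq (gl_coord X e.+2 a b) (p ^ e.+1)) gl_coord_low_digits //.
by rewrite natrD natrM natrX rmorphD rmorphM rmorphXn rmorph_nat /=; ring.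
Qed.

Lemma gl_coord_succ_eq1 X e : gl_coord X e = 1%:M ->
  gl_digit X e = 0 -> gl_coord X e.+1 = 1%:M.
Proof.
move=> Xe1 /matrixP A0; apply/matrixP => a b; apply: val_inj.
rewrite /= val_Zp_scalar1 ?pexp_gt1 // -(gl_coord_modn X e.+1 1) addn1.
have /dvdnP[q q_def] : (p %| gl_coord X e.+2 a b %/ p ^ e.+1)%N.
  by have /eqP := A0 a b; rewrite !mxE intr_Fp_eq0.
rewrite (divn_eq (gl_coord X e.+2 a b) (p ^ e.+1)) q_def gl_coord_low_digits //.
by rewrite -mulnA -expnS modnMDl modn_small // (leq_ltn_trans (leq_b1 _)) ?pexp_gt1.
Qed.

End PadicCoordinates.

Lemma rel_holds_first_order p n' (c : Zpadic p) (X Y : GLn1 p n'.+1) e :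
  prime p -> (2 < p)%N -> gl_coord X e = 1%:M -> gl_coord Y e = 1%:M ->
  rel_holds c X Y ->
  let a := gl_digit X e in let b := gl_digit Y e in
  ((p%:Z ^+ e)%:~R : 'F_p) *: (a * b - b * a) + (zp_coord c e.+2 : nat)%:R *: a = 0.
Proof.
move=> p_pr p_gt2 Xe1 Ye1.
move=> /(_ e.+2)/mxpow_mxcomm_eq1; rewrite !(gl_coord_first_order p_pr) // => rel.
set A := gl_first_order X e in rel *; set B := gl_first_order Y e in rel *.
set K := (zp_coord c e.+2 : nat) in rel *.
set t : 'Z_(p ^ e.+3) := (p%:Z ^+ e.+1)%:~R.
rewrite !map_mxD !map_mx1 !map_mxZ -/t in rel.
have p_odd : odd p by case/even_prime: p_pr => // p2; move: p_gt2; rewrite p2.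
have t3_eq0 : t ^+ 3 = 0.
  by apply/eqP; rewrite -rmorphXn (intr_pexp_eq0 p_pr) -exprM; apply: dvdz_exp2l; lia.
have pt2_eq0 : p%:R * t ^+ 2 = 0.
  apply/eqP; rewrite -[p%:R]/((p%:Z)%:~R) -rmorphXn -rmorphM (intr_pexp_eq0 p_pr).
  by rewrite -exprM -exprS; apply: dvdz_exp2l; lia.
have := first_order_commutator p_odd t3_eq0 pt2_eq0 rel.
set M := (p%:Z ^+ e) *: (A * B - B * A) + K%:Z *: A.
have -> : t ^+ 2 *: (map_mx intr A * map_mx intr B - map_mx intr B * map_mx intr A)
            + ((p * K)%:R * t) *: map_mx intr A = map_mx intr (p%:Z ^+ e.+2 *: M).
  have t2E : t ^+ 2 = intr (p%:Z ^+ e.+2) * intr (p%:Z ^+ e).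
    by rewrite -rmorphXn -rmorphM -exprM -exprD; congr (intr (_ ^+ _)); lia.
  have ptE : (p * K)%:R * t = intr (p%:Z ^+ e.+2) * intr K%:Z.
    rewrite -[(p * K)%:R]/(intr (p * K)%N%:Z) -!rmorphM; congr intr.
    by rewrite PoszM !exprS; ring.
  rewrite map_mxZ map_mxD !map_mxZ map_mxB !map_mxM !mulmxE t2E ptE.
  by rewrite -!scalerA -scalerDr.
move=> /(map_mx_intr_Fp_eq0 p_pr).
by rewrite map_mxD !map_mxZ map_mxB !map_mxM.
Qed.

Theorem theorem1p9 (p m : nat) (c : nat -> Zpadic p) :
  prime p -> (2 < p)%N -> (2 <= m)%N ->
  (forall i : nat, (i < 2 * m)%N -> zp_coord (c i) 0 != 0%R) ->
  forall n : nat, (n < p)%N ->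
  forall f : hom_G_GLn1 m n c,
  forall i : nat, (i < 2 * m)%N -> gl_trivial (proj1_sig f i).
Proof.
move=> p_pr p_gt2 _ c_neq0 [|n'] n_lt_p [X relX] i lt_i k /=.
  by apply/matrixP => [] [].
have char_gt_n j : (0 < j <= n'.+1)%N -> j%:R != 0 :> 'F_p.
  by case/andP=> j_gt0 j_le_n; rewrite natr_Fp_neq0 // j_gt0 (leq_ltn_trans j_le_n).
have next_lt j : (j < 2 * m)%N -> (j.+1 %% (2 * m) < 2 * m)%N.
  by move=> lt_j; rewrite ltn_pmod // (leq_ltn_trans _ lt_j).
elim: k i lt_i => [|e IHe] i lt_i; first exact: gl_one_mod_p.
apply: (gl_coord_succ_eq1 p_pr (IHe i lt_i)).
have lt_j := next_lt i lt_i.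
apply: (linked_ad_eq0 char_gt_n (zp_coord_Fp_neq0 p_pr e.+2 (c_neq0 i lt_i))
         (zp_coord_Fp_neq0 p_pr e.+2 (c_neq0 _ lt_j))).
  exact: rel_holds_first_order p_pr p_gt2 (IHe _ lt_i) (IHe _ lt_j) (relX i lt_i).
have lt_k := next_lt _ lt_j.
exact: rel_holds_first_order p_pr p_gt2 (IHe _ lt_j) (IHe _ lt_k) (relX _ lt_j).
Qed.
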